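(* In the setting below, if $$\sum_{t\in\mathcal K}\hat d_t^\top Z^\top f(x_t)< \sum_{t\in\mathcal K^c}\|Z^\top f(x_t)\|_2\quad\text{for all nonzero } Z\in\mathbb{R}^{m\times n},$$ then $\bar A$ is the unique global minimizer of $\min_{A\in\mathbb{R}^{n\times m}}\sum_{t=0}^{T-1}\|(\bar A-A)f(x_t)+\bar d_t\|_2$.
   Context: $f:\mathbb{R}^n\to\mathbb{R}^m$ is given, $\bar A\in\mathbb{R}^{n\times m}$, $\bar d_0,\dots,\bar d_{T-1}\in\mathbb{R}^n$, and $x_0=0_n$, $x_{t+1}=\bar A f(x_t)+\bar d_t$ for $t=0,\dots,T-1$. $\mathcal K:=\{t\in\{0,\dots,T-1\}:\bar d_t\ne 0\}$, $\mathcal K^c:=\{0,\dots,T-1\}\setminus\mathcal K$, $\hat d_t:=\bar d_t/\|\bar d_t\|_2$ for $t\in\mathcal K$. *)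

From HB Require Import structures.
From mathcomp Require Import all_boot all_order all_algebra.
Set Implicit Arguments. Unset Strict Implicit. Unset Printing Implicit Defensive.
Import Order.TTheory GRing.Theory Num.Theory.
Local Open Scope ring_scope.

Definition norm2 (R : rcfType) (k : nat) (v : 'cV[R]_k) : R :=
  Num.sqrt (\sum_(i < k) v i 0 ^+ 2).

Fixpoint traj (R : rcfType) (n m : nat) (f : 'cV[R]_n -> 'cV[R]_m)
  (Abar : 'M[R]_(n, m)) (d : nat -> 'cV[R]_n) (t : nat) : 'cV[R]_n :=
  match t with
  | 0 => 0
  | t'.+1 => Abar *m f (traj f Abar d t') + d t'
  end.

Definition dhat (R : rcfType) (n : nat) (d : nat -> 'cV[R]_n) (t : nat) : 'cV[R]_n :=
  (norm2 (d t))^-1 *: d t.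

Definition objective (R : rcfType) (n m T : nat) (f : 'cV[R]_n -> 'cV[R]_m)
  (Abar : 'M[R]_(n, m)) (d : nat -> 'cV[R]_n) (A : 'M[R]_(n, m)) : R :=
  \sum_(t < T) norm2 ((Abar - A) *m f (traj f Abar d t) + d t).

(* For [d <> 0], Cauchy-Schwarz gives the tangent-plane bound
   [||v + d|| >= ||d|| + (d / ||d||)^T v], while for [d = 0] simply
   [||v + d|| = ||v||].  Summing with [v_t = (Abar - A) f(x_t)] shows that
   [J A - J Abar] is at least
   [sum_{t in K} dhat_t^T (Abar - A) f(x_t) + sum_{t in K^c} ||(Abar - A) f(x_t)||],
   which is positive for [A <> Abar] by the hypothesis at [Z = (A - Abar)^T]. *)

From HB Require Import structures.
From mathcomp Require Import all_boot all_order all_algebra.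
From mathcomp Require Import ring.
Set Implicit Arguments. Unset Strict Implicit. Unset Printing Implicit Defensive.
Import Order.TTheory GRing.Theory Num.Theory.
Local Open Scope ring_scope.

Section EuclideanNorm.
Variables (R : rcfType) (k : nat).
Implicit Types u v w : 'cV[R]_k.

Definition vdot u v : R := \sum_(i < k) u i 0 * v i 0.

Lemma trmx_mul_vdot u v : (u^T *m v) 0 0 = vdot u v.
Proof. by rewrite mxE; apply: eq_bigr => i _; rewrite mxE. Qed.

Lemma vdotDr u v w : vdot u (v + w) = vdot u v + vdot u w.
Proof. by rewrite /vdot -big_split; apply: eq_bigr => i _; rewrite mxE mulrDr. Qed.

Lemma vdot0l v : vdot 0 v = 0.
Proof. by rewrite /vdot big1 // => i _; rewrite mxE mul0r. Qed.

Lemma vdot0r u : vdot u 0 = 0.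
Proof. by rewrite /vdot big1 // => i _; rewrite mxE mulr0. Qed.

Lemma norm2_ge0 u : 0 <= norm2 u.
Proof. exact: sqrtr_ge0. Qed.

Lemma norm2_sqr u : norm2 u ^+ 2 = vdot u u.
Proof. by rewrite sqr_sqrtr //; apply: sumr_ge0 => i _; apply: sqr_ge0. Qed.

Lemma norm2_0 : norm2 (0 : 'cV[R]_k) = 0.
Proof. by rewrite /norm2 big1 ?sqrtr0 // => i _; rewrite mxE expr0n. Qed.

Lemma norm2_eq0 u : (norm2 u == 0) = (u == 0).
Proof.
apply/idP/eqP => [|->]; last by rewrite norm2_0.
rewrite sqrtr_eq0 => sum_le0.
have sum0 : \sum_(i < k) u i 0 ^+ 2 = 0.
  by apply/eqP; rewrite eq_le sum_le0 sumr_ge0 // => i _; apply: sqr_ge0.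
have u0 := psumr_eq0P (fun i _ => sqr_ge0 (u i 0)) sum0.
apply/matrixP => i j; rewrite (ord1 j) !mxE.
by apply/eqP; rewrite -sqrf_eq0 u0.
Qed.

Lemma norm2_gt0 u : (0 < norm2 u) = (u != 0).
Proof. by rewrite lt_def norm2_ge0 norm2_eq0 andbT. Qed.

Lemma norm2N u : norm2 (- u) = norm2 u.
Proof. by congr Num.sqrt; apply: eq_bigr => i _; rewrite mxE sqrrN. Qed.

Lemma vdot_le_norm2 u v : vdot u v <= norm2 u * norm2 v.
Proof.
have [-> | u0] := eqVneq u 0; first by rewrite vdot0l mulr_ge0 ?norm2_ge0.
have [-> | v0] := eqVneq v 0; first by rewrite vdot0r mulr_ge0 ?norm2_ge0.
set a := norm2 u; set b := norm2 v.
have : 0 <= \sum_(i < k) (b * u i 0 - a * v i 0) ^+ 2.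
  by apply: sumr_ge0 => i _; apply: sqr_ge0.
have -> : \sum_(i < k) (b * u i 0 - a * v i 0) ^+ 2
    = b ^+ 2 * vdot u u - 2 * (a * b) * vdot u v + a ^+ 2 * vdot v v.
  rewrite /vdot !mulr_sumr -sumrB -big_split.
  by apply: eq_bigr => i _ /=; ring.
rewrite -!norm2_sqr -/a -/b.
have -> : b ^+ 2 * a ^+ 2 - 2 * (a * b) * vdot u v + a ^+ 2 * b ^+ 2
    = 2 * (a * b) * (a * b - vdot u v) by ring.
by rewrite pmulr_rge0 ?subr_ge0 // mulr_gt0 // mulr_gt0 ?norm2_gt0.
Qed.

Lemma norm2_addr_ge_tangent w v : v != 0 ->
  norm2 v + (((norm2 v)^-1 *: v)^T *m w) 0 0 <= norm2 (w + v).
Proof.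
rewrite -norm2_gt0 => v_gt0.
rewrite linearZ -scalemxAl mxE trmx_mul_vdot -(ler_pM2l v_gt0) mulrDr mulrA.
rewrite mulfV ?gt_eqF // mul1r -expr2 norm2_sqr -vdotDr addrC.
exact: vdot_le_norm2.
Qed.

End EuclideanNorm.

Lemma sum_norm2_addr_ge (R : rcfType) (n T : nat) (d v : nat -> 'cV[R]_n) :
  \sum_(t < T) norm2 (d t)
  + (\sum_(t < T | d t != 0) ((dhat d t)^T *m v t) 0 0
     + \sum_(t < T | d t == 0) norm2 (v t))
  <= \sum_(t < T) norm2 (v t + d t).
Proof.
rewrite (bigID (fun t : 'I_T => d t == 0)) [leRHS](bigID (fun t : 'I_T => d t == 0)).
rewrite /= [X in _ + X]addrC addrACA -!big_split /=.
apply: lerD; apply: ler_sum => t.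
  by move=> /eqP->; rewrite addr0 norm2_0 add0r.
exact: norm2_addr_ge_tangent.
Qed.

Section Identification.
Variables (R : rcfType) (n m T : nat) (f : 'cV[R]_n -> 'cV[R]_m).
Variables (Abar : 'M[R]_(n, m)) (d : nat -> 'cV[R]_n).

Local Notation x := (traj f Abar d).
Local Notation J := (objective T f Abar d).

Hypothesis identifiable : forall Z : 'M[R]_(m, n), Z != 0 ->
  \sum_(t < T | d t != 0) ((dhat d t)^T *m Z^T *m f (x t)) 0 0
  < \sum_(t < T | d t == 0) norm2 (Z^T *m f (x t)).

Lemma objective_Abar : J Abar = \sum_(t < T) norm2 (d t).
Proof. by apply: eq_bigr => t _; rewrite subrr mul0mx add0r. Qed.

Lemma objective_Abar_lt A : A != Abar -> J Abar < J A.
Proof.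
rewrite -subr_eq0 -trmx_eq0 => /identifiable; rewrite trmxK.
set E := Abar - A; have -> : A - Abar = - E by rewrite opprB.
move=> hZ.
have gain_gt0 : 0 < \sum_(t < T | d t != 0) ((dhat d t)^T *m (E *m f (x t))) 0 0
                   + \sum_(t < T | d t == 0) norm2 (E *m f (x t)).
  rewrite addrC -[X in _ + X]opprK subr_gt0 -sumrN; move: hZ.
  congr (_ < _).
    by apply: eq_bigr => t _; rewrite mulmxN mulNmx mulmxA mxE.
  by apply: eq_bigr => t _; rewrite mulNmx norm2N.
rewrite objective_Abar.
apply: (lt_le_trans _ (sum_norm2_addr_ge T d (fun t => E *m f (x t)))).
by rewrite ltrDl.
Qed.

End Identification.

Theorem corollary3 (R : rcfType) (n m T : nat) (f : 'cV[R]_n -> 'cV[R]_m)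
  (Abar : 'M[R]_(n, m)) (d : nat -> 'cV[R]_n) :
  (forall Z : 'M[R]_(m, n), Z != 0 ->
     \sum_(t < T | d t != 0) ((dhat d t)^T *m Z^T *m f (traj f Abar d t)) 0 0
     < \sum_(t < T | d t == 0) norm2 (Z^T *m f (traj f Abar d t))) ->
  (forall A : 'M[R]_(n, m), objective T f Abar d Abar <= objective T f Abar d A) /\
  (forall A : 'M[R]_(n, m),
     (forall B : 'M[R]_(n, m), objective T f Abar d A <= objective T f Abar d B) ->
     A = Abar).
Proof.
move=> identifiable; split=> [A | A A_min].
  have [-> | A_ne] := eqVneq A Abar; first exact: lexx.
  exact/ltW/(objective_Abar_lt identifiable).
apply/eqP; apply: contraT => A_ne.
have := objective_Abar_lt identifiable A_ne.
by rewrite ltNge A_min.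
Qed.
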